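(* Let $(E,\rho_\theta)$ be a complete $b_v(\theta)$ metric space and let $S:E\to E$ satisfy $\rho_\theta(Su,Sw)\le\beta\rho_\theta(u,Su)+\gamma\rho_\theta(w,Sw)$ for all $u,w\in E$, where $\beta,\gamma\ge0$ are constants with $\beta+\gamma<1$, and where $\Gamma_1<\frac1{\Gamma_2}$ with $\Gamma_1=\min\{\beta,\gamma\}$ and $\Gamma_2=\max\{\theta(u,Su),\theta(Su,u)\}$ (for all $u\in E$). Then $S$ has a unique fixed point.
   Context: Let $E$ be a nonempty set, $\theta:E\times E\to[1,\infty)$ a function and $v\in\mathbb{N}$. A map $\rho_\theta:E\times E\to[0,\infty)$ is a $b_v(\theta)$ metric (and $(E,\rho_\theta)$ a $b_v(\theta)$ metric space) if for all $u,w\in E$: $\rho_\theta(u,w)=0$ iff $u=w$; $\rho_\theta(u,w)=\rho_\theta(w,u)$; and for all $u,z_1,\dots,z_v,w\in E$ pairwise distinct, $\rho_\theta(u,w)\le\theta(u,w)[\rho_\theta(u,z_1)+\rho_\theta(z_1,z_2)+\dots+\rho_\theta(z_{v-1},z_v)+\rho_\theta(z_v,w)]$. A sequence $\{u_n\}$ converges to $u$ if for every $\varepsilon>0$ there is $n_0$ with $\rho_\theta(u_n,u)<\varepsilon$ for all $n\ge n_0$; it is Cauchy if for every $\varepsilon>0$ there is $n_0$ with $\rho_\theta(u_n,u_{n+p})<\varepsilon$ for all $n\ge n_0$ and $p>0$; the space is complete if every Cauchy sequence converges in $E$. *)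

From Stdlib Require Import Reals Lra Lia.
Open Scope R_scope.

(* The points u, z_1, ..., z_v, w of the generalized
   triangle inequality are encoded as p 0 = u, p i = z_i (1 <= i <= v),
   p (v+1) = w; the sum  sum_{i=0}^{v} rho (p i) (p (i+1))  is
   rho(u,z_1) + rho(z_1,z_2) + ... + rho(z_v,w). *)
Definition is_bv_metric (E : Type) (theta : E -> E -> R) (v : nat)
  (rho : E -> E -> R) : Prop :=
  (forall u w, 0 <= rho u w) /\
  (forall u w, rho u w = 0 <-> u = w) /\
  (forall u w, rho u w = rho w u) /\
  (forall p : nat -> E,
     (forall i j, (i < j <= S v)%nat -> p i <> p j) ->
     rho (p 0%nat) (p (S v)) <=
       theta (p 0%nat) (p (S v)) * sum_f_R0 (fun i => rho (p i) (p (S i))) v).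

Definition bv_converges (E : Type) (rho : E -> E -> R) (x : nat -> E) (u : E) : Prop :=
  forall eps, 0 < eps -> exists n0 : nat, forall n, (n >= n0)%nat -> rho (x n) u < eps.

Definition bv_cauchy (E : Type) (rho : E -> E -> R) (x : nat -> E) : Prop :=
  forall eps, 0 < eps -> exists n0 : nat, forall n p, (n >= n0)%nat -> (p > 0)%nat ->
    rho (x n) (x (n + p)%nat) < eps.

Definition bv_complete (E : Type) (rho : E -> E -> R) : Prop :=
  forall x : nat -> E, bv_cauchy E rho x -> exists u, bv_converges E rho x u.

(* The Picard iterates x_(n+1) = S x_n of a Kannan-type map have consecutive
   distances shrinking geometrically with ratio beta / (1 - gamma), and the
   Kannan inequality bounds rho(x_(n+1), x_(m+1)) by those distances, so the
   orbit is Cauchy.  For its limit u, the b_v inequality along the chain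
   u, x_(n+1), ..., x_(n+v), S u makes every link small except the last, which
   the Kannan inequality (applied both ways round) bounds by
   min(beta, gamma) rho(u, S u) plus a small term.  Hence
   rho(u, S u) <= theta(u, S u) min(beta, gamma) rho(u, S u), which forces
   S u = u because theta(u, S u) min(beta, gamma) < 1.  The b_v inequality
   only applies to pairwise distinct points, so the case where the orbit
   reaches a fixed point is split off first; otherwise the orbit is injective. *)
From Stdlib Require Import Reals Lra Lia Classical.
Open Scope R_scope.

Lemma sum_f_R0_le_uniform_last (g : nat -> R) (e : R) (n : nat) :
  (forall i, (i < n)%nat -> g i <= e) -> sum_f_R0 g n <= INR n * e + g n.
Proof.
  induction n as [|n IHn]; intros Hg; simpl; [lra|].
  assert (Hn : sum_f_R0 g n <= INR n * e + g n) by (apply IHn; intros; apply Hg; lia).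
  pose proof (Hg n (Nat.lt_succ_diag_r n)).
  destruct n; simpl in *; lra.
Qed.

Lemma bv_triangle_uniform (E : Type) (theta : E -> E -> R) (v : nat)
  (rho : E -> E -> R) (p : nat -> E) (e : R) :
  (forall u w, 0 <= theta u w) -> is_bv_metric E theta v rho ->
  (forall i j, (i < j <= S v)%nat -> p i <> p j) ->
  (forall i, (i < v)%nat -> rho (p i) (p (S i)) <= e) ->
  rho (p 0%nat) (p (S v)) <=
    theta (p 0%nat) (p (S v)) * (INR v * e + rho (p v) (p (S v))).
Proof.
  intros theta_ge0 (_ & _ & _ & Htriangle) Hdistinct Hlinks.
  eapply Rle_trans; [exact (Htriangle p Hdistinct)|].
  apply Rmult_le_compat_l; [apply theta_ge0|].
  exact (sum_f_R0_le_uniform_last (fun i => rho (p i) (p (S i))) e v Hlinks).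
Qed.

Definition chain {E : Type} (u w : E) (y : nat -> E) (v i : nat) : E :=
  match i with
  | O => u
  | S j => if (j <? v)%nat then y j else w
  end.

Lemma chain_inner {E : Type} (u w : E) y v j :
  (j < v)%nat -> chain u w y v (S j) = y j.
Proof. intros Hj. simpl. destruct (Nat.ltb_spec j v); [reflexivity | lia]. Qed.

Lemma chain_last {E : Type} (u w : E) y v : chain u w y v (S v) = w.
Proof. simpl. destruct (Nat.ltb_spec v v); [lia | reflexivity]. Qed.

Lemma chain_distinct {E : Type} (u w : E) y v :
  u <> w ->
  (forall j, (j < v)%nat -> y j <> u /\ y j <> w) ->
  (forall i j, (i < j < v)%nat -> y i <> y j) ->
  forall i j, (i < j <= S v)%nat -> chain u w y v i <> chain u w y v j.
Proof.
  intros Huw Hy Hinj [|i] [|j] Hij; try lia; simpl;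
    destruct (Nat.ltb_spec j v); try (destruct (Nat.ltb_spec i v)); try lia.
  - destruct (Hy j) as [Hyu _]; [assumption | congruence].
  - exact Huw.
  - apply Hinj; lia.
  - destruct (Hy i) as [_ Hyw]; assumption.
Qed.

Lemma mul_lt_1_of_lt_inv_Rmax (a b m : R) :
  0 < a -> 0 <= m -> m < 1 / Rmax a b -> a * m < 1.
Proof.
  intros Ha Hm Hlt.
  pose proof (Rmax_l a b) as Hmax.
  apply (Rmult_lt_compat_r (Rmax a b)) in Hlt; [|lra].
  replace (1 / Rmax a b * Rmax a b) with 1 in Hlt by (field; lra).
  nra.
Qed.

Section Kannan.

Variables (E : Type) (rho : E -> E -> R) (f : E -> E) (beta gamma : R).
Hypothesis rho_ge0 : forall u w, 0 <= rho u w.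
Hypothesis rho_eq0 : forall u w, rho u w = 0 <-> u = w.
Hypothesis rho_sym : forall u w, rho u w = rho w u.
Hypothesis beta_ge0 : 0 <= beta.
Hypothesis gamma_ge0 : 0 <= gamma.
Hypothesis beta_gamma_lt1 : beta + gamma < 1.
Hypothesis kannan :
  forall u w, rho (f u) (f w) <= beta * rho u (f u) + gamma * rho w (f w).

Lemma rho_pos u w : u <> w -> 0 < rho u w.
Proof.
  intros Huw. destruct (rho_ge0 u w) as [H|H]; [exact H|].
  exfalso. apply Huw, rho_eq0. auto.
Qed.

Lemma kannan_fixpoint_unique a b : f a = a -> f b = b -> a = b.
Proof.
  intros Ha Hb. apply rho_eq0.
  pose proof (kannan a b) as H. rewrite Ha, Hb in H.
  assert (Haa : rho a a = 0) by (apply rho_eq0; reflexivity).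
  assert (Hbb : rho b b = 0) by (apply rho_eq0; reflexivity).
  pose proof (rho_ge0 a b). rewrite Haa, Hbb in H. lra.
Qed.

Lemma kannan_dist_image_le a b :
  rho (f a) (f b) <= Rmin beta gamma * rho b (f b) + rho a (f a).
Proof.
  pose proof (kannan a b). pose proof (kannan b a) as Hba. rewrite rho_sym in Hba.
  pose proof (rho_ge0 a (f a)). pose proof (rho_ge0 b (f b)).
  unfold Rmin; destruct (Rle_dec beta gamma); nra.
Qed.

Definition kannan_ratio : R := beta / (1 - gamma).

Lemma kannan_ratio_ge0 : 0 <= kannan_ratio.
Proof. unfold kannan_ratio. apply Rle_mult_inv_pos; lra. Qed.

Lemma kannan_ratio_lt1 : kannan_ratio < 1.
Proof.
  unfold kannan_ratio. apply (Rmult_lt_reg_r (1 - gamma)); [lra|].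
  replace (beta / (1 - gamma) * (1 - gamma)) with beta by (field; lra). lra.
Qed.

Definition step_dist (x0 : E) (n : nat) : R :=
  rho (Nat.iter n f x0) (Nat.iter (S n) f x0).

Lemma step_dist_succ_le x0 n :
  step_dist x0 (S n) <= kannan_ratio * step_dist x0 n.
Proof.
  unfold step_dist; simpl.
  pose proof (kannan (Nat.iter n f x0) (f (Nat.iter n f x0))) as H.
  apply (Rmult_le_reg_r (1 - gamma)); [lra|].
  unfold kannan_ratio.
  replace (beta / (1 - gamma) * rho (Nat.iter n f x0) (f (Nat.iter n f x0)) * (1 - gamma))
    with (beta * rho (Nat.iter n f x0) (f (Nat.iter n f x0))) by (field; lra).
  lra.
Qed.

Lemma step_dist_le_pow x0 n : step_dist x0 n <= kannan_ratio ^ n * step_dist x0 0.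
Proof.
  induction n as [|n IHn]; simpl; [lra|].
  pose proof (step_dist_succ_le x0 n). pose proof kannan_ratio_ge0.
  rewrite Rmult_assoc. eapply Rle_trans; [eassumption|].
  apply Rmult_le_compat_l; assumption.
Qed.

Lemma step_dist_eventually_lt x0 eps :
  0 < eps -> exists N, forall n, (N <= n)%nat -> step_dist x0 n < eps.
Proof.
  intros Heps.
  pose proof kannan_ratio_ge0 as Hk0. pose proof kannan_ratio_lt1 as Hk1.
  set (d0 := step_dist x0 0). assert (Hd0 : 0 <= d0) by apply rho_ge0.
  destruct (pow_lt_1_zero kannan_ratio ltac:(rewrite Rabs_pos_eq; lra)
              (eps / (d0 + 1)) ltac:(apply Rdiv_lt_0_compat; lra)) as [N HN].
  exists N. intros n Hn.
  specialize (HN n Hn). rewrite Rabs_pos_eq in HN by (apply pow_le; lra).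
  apply (Rmult_lt_compat_r (d0 + 1)) in HN; [|lra].
  replace (eps / (d0 + 1) * (d0 + 1)) with eps in HN by (field; lra).
  pose proof (step_dist_le_pow x0 n) as Hpow. fold d0 in Hpow.
  pose proof (pow_le kannan_ratio n Hk0). nra.
Qed.

Lemma step_dist_antitone x0 m n : (m <= n)%nat -> step_dist x0 n <= step_dist x0 m.
Proof.
  intros Hmn. induction Hmn as [|n _ IH]; [lra|].
  pose proof (step_dist_succ_le x0 n). pose proof kannan_ratio_lt1.
  assert (0 <= step_dist x0 n) by apply rho_ge0. nra.
Qed.

Lemma iter_cauchy x0 : bv_cauchy E rho (fun n => Nat.iter n f x0).
Proof.
  intros eps Heps.
  destruct (step_dist_eventually_lt x0 eps Heps) as [N HN].
  exists (S N). intros [|n] p Hn Hp; [lia|].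
  pose proof (kannan (Nat.iter n f x0) (Nat.iter (n + p) f x0)). simpl.
  pose proof (HN n ltac:(lia)). pose proof (HN (n + p)%nat ltac:(lia)).
  pose proof (rho_ge0 (Nat.iter n f x0) (f (Nat.iter n f x0))).
  pose proof (rho_ge0 (Nat.iter (n + p) f x0) (f (Nat.iter (n + p) f x0))).
  unfold step_dist in *; simpl in *. nra.
Qed.

Section NoFixedIterate.

Variable x0 : E.
Hypothesis no_fixed_iterate : forall n, f (Nat.iter n f x0) <> Nat.iter n f x0.

Lemma iter_injective a b : (a < b)%nat -> Nat.iter a f x0 <> Nat.iter b f x0.
Proof.
  intros Hab Heq.
  assert (Hab_eq : step_dist x0 a = step_dist x0 b)
    by (unfold step_dist; simpl; rewrite Heq; reflexivity).
  assert (Ha_pos : 0 < step_dist x0 a)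
    by (apply rho_pos, not_eq_sym, no_fixed_iterate).
  pose proof (step_dist_antitone x0 (S a) b Hab). pose proof (step_dist_succ_le x0 a).
  pose proof kannan_ratio_lt1. nra.
Qed.

Lemma iter_eventually_ne y : exists A, forall j, (A <= j)%nat -> Nat.iter j f x0 <> y.
Proof.
  destruct (classic (exists j, Nat.iter j f x0 = y)) as [[j Hj] | Hnever].
  - exists (S j). intros i Hi Heq. apply (iter_injective j i); [lia | congruence].
  - exists 0%nat. intros i _ Heq. apply Hnever. eauto.
Qed.

Variables (theta : E -> E -> R) (v : nat).
Hypothesis theta_ge1 : forall u w, 1 <= theta u w.
Hypothesis v_ge1 : (1 <= v)%nat.
Hypothesis rho_bv : is_bv_metric E theta v rho.

Variable u : E.
Hypothesis iter_to_u : bv_converges E rho (fun n => Nat.iter n f x0) u.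

Lemma kannan_limit_displacement_le eps :
  f u <> u -> 0 < eps ->
  rho u (f u) <= theta u (f u) * Rmin beta gamma * rho u (f u) + eps.
Proof.
  intros Hfu Heps.
  set (t := theta u (f u)). assert (Ht : 1 <= t) by apply theta_ge1.
  set (e := eps / (t * (INR v + 1))).
  assert (He : 0 < e) by (pose proof (pos_INR v); apply Rdiv_lt_0_compat; nra).
  destruct (step_dist_eventually_lt x0 e He) as [N1 HN1].
  destruct (iter_to_u e He) as [N2 HN2].
  destruct (iter_eventually_ne u) as [A1 HA1].
  destruct (iter_eventually_ne (f u)) as [A2 HA2].
  set (n := (N1 + N2 + A1 + A2)%nat).
  set (p := chain u (f u) (fun j => Nat.iter (S (n + j)) f x0) v).
  assert (Hdistinct : forall i j, (i < j <= S v)%nat -> p i <> p j).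
  { apply chain_distinct; [auto | |].
    - intros j _. split; [apply HA1 | apply HA2]; lia.
    - intros i j Hij. apply iter_injective. lia. }
  assert (Hlinks : forall i, (i < v)%nat -> rho (p i) (p (S i)) <= e).
  { intros [|i] Hi; unfold p; rewrite chain_inner by lia.
    - simpl chain. rewrite rho_sym. left. apply HN2. lia.
    - rewrite chain_inner by lia. rewrite Nat.add_succ_r.
      left. apply HN1. lia. }
  assert (HpS : p (S v) = f u) by apply chain_last.
  assert (Hlast : rho (p v) (f u) <= Rmin beta gamma * rho u (f u) + e).
  { unfold p. destruct v as [|v']; [lia|]. rewrite chain_inner by lia. simpl.
    pose proof (kannan_dist_image_le (Nat.iter (n + v') f x0) u).
    pose proof (HN1 (n + v')%nat ltac:(lia)). unfold step_dist in *; simpl in *. lra. }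
  assert (theta_ge0 : forall a b, 0 <= theta a b)
    by (intros a b; pose proof (theta_ge1 a b); lra).
  pose proof (bv_triangle_uniform E theta v rho p e theta_ge0 rho_bv Hdistinct Hlinks) as Htri.
  rewrite HpS in Htri. simpl (p 0%nat) in Htri. fold t in Htri.
  assert (Hsum : t * (INR v * e + rho (p v) (f u))
                 <= t * (INR v * e + (Rmin beta gamma * rho u (f u) + e)))
    by (apply Rmult_le_compat_l; lra).
  assert (Heps_eq : t * (INR v * e + e) = eps) by (unfold e; field; pose proof (pos_INR v); nra).
  nra.
Qed.

Lemma kannan_limit_fixed : theta u (f u) * Rmin beta gamma < 1 -> f u = u.
Proof.
  intros Hcontract. apply NNPP. intros Hfu.
  assert (Hgap : rho u (f u) <= theta u (f u) * Rmin beta gamma * rho u (f u))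
    by (apply Rle_plus_epsilon; intros; apply kannan_limit_displacement_le; assumption).
  pose proof (rho_pos u (f u) (not_eq_sym Hfu)). nra.
Qed.

End NoFixedIterate.

End Kannan.

Theorem mainTheorem12
  (E : Type) (HE : inhabited E) (theta : E -> E -> R) (v : nat)
  (rho : E -> E -> R) (S : E -> E) (beta gamma : R) :
  (forall u w, 1 <= theta u w) ->
  (1 <= v)%nat ->
  is_bv_metric E theta v rho ->
  bv_complete E rho ->
  0 <= beta -> 0 <= gamma -> beta + gamma < 1 ->
  (forall u w, rho (S u) (S w) <= beta * rho u (S u) + gamma * rho w (S w)) ->
  (forall u, Rmin beta gamma < 1 / Rmax (theta u (S u)) (theta (S u) u)) ->
  exists! u, S u = u.
Proof.
  intros theta_ge1 v_ge1 rho_bv complete beta_ge0 gamma_ge0 beta_gamma_lt1 kannan Hmin_lt.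
  pose proof rho_bv as (rho_ge0 & rho_eq0 & rho_sym & _).
  assert (Hexists : exists u, S u = u).
  { destruct HE as [x0].
    destruct (classic (exists n, S (Nat.iter n S x0) = Nat.iter n S x0))
      as [[n Hn] | Hnone]; [exists (Nat.iter n S x0); exact Hn|].
    assert (Hcauchy : bv_cauchy E rho (fun n => Nat.iter n S x0))
      by (apply iter_cauchy with beta gamma; assumption).
    destruct (complete _ Hcauchy) as [u Hu].
    exists u.
    apply (kannan_limit_fixed E rho S beta gamma) with x0 theta v; try assumption.
    - intros n Hn. apply Hnone. exists n. exact Hn.
    - apply (mul_lt_1_of_lt_inv_Rmax _ (theta (S u) u)); [| apply Rmin_glb; assumption | apply Hmin_lt].
      pose proof (theta_ge1 u (S u)). lra. }
  destruct Hexists as [u Hu]. exists u. split; [exact Hu|].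
  intros w Hw. apply (kannan_fixpoint_unique E rho S beta gamma); assumption.
Qed.
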